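(* Let $F:\mathbb{R}^n\to\mathbb{R}$ be convex and $h:\mathbb{R}^n\to\mathbb{R}^p$ with $-h$ convex, both continuous, let $\emptyset\ne I\subseteq\{1,\dots,n\}$, and consider the convex binary MINLP $\min\{F(x): h(x)\ge 0,\ x_i\in\{0,1\}\text{ for } i\in I\}$, where $\{x: h(x)\ge 0\}$ is nonempty and compact. Let $X:=\{x\in\mathbb{R}^n: h(x)\ge 0,\ x_I\in[0,1]^I\}$, $Y:=\{0,1\}^I$ and $$\min_{x,y}\ \|x_I-y\|_1 \quad\text{s.t.}\quad x\in X,\ y\in Y. \qquad (\ast)$$ The idealized feasibility pump for this convex MINLP (starting from a solution $x^0$ of the continuous relaxation and $y^0$ the rounding of $x^0_I$, alternately computing $x^{k+1}\in\arg\min_{x\in X}\|x_I-y^k\|_1$ as a global minimizer and $y^{k+1}\in\arg\min_{y\in Y}\|x^{k+1}_I-y\|_1$ as the rounding of $x^{k+1}_I$ with ties broken lexicographically minimally, without random perturbations, and stopping as soon as the iterate is a partial minimum of $(\ast)$) is the alternating direction method applied to $(\ast)$. It terminates at a partial minimum $(x^*,y^* )$ of $(\ast)$ after a finite number of iterations. If this partial minimum has objective value $\|x^*_I-y^*\|_1=0$, then $(x^*,y^* )$ is feasible for the convex MINLP (i.e., $x^*$ is feasible for it).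
   Context: A point $(x^*,y^* )\in X\times Y$ is a partial minimum of $(\ast)$ if $\|x^*_I-y^*\|_1\le\|x_I-y^*\|_1$ for all $x\in X$ and $\|x^*_I-y^*\|_1\le \|x^*_I-y\|_1$ for all $y\in Y$. $x_I$ denotes the subvector of $x$ with components indexed by $I$. *)

From HB Require Import structures.
From mathcomp Require Import all_boot all_order all_algebra.
From mathcomp Require Import all_classical all_reals all_analysis.
Unset Printing Implicit Defensive.

Import Order.TTheory GRing.Theory Num.Theory.
Import numFieldNormedType.Exports.
Local Open Scope classical_set_scope.
Local Open Scope ring_scope.

Section FP.
Context {R : realType} {n p : nat}.

Definition convex_fun (f : 'rV[R]_n -> R) : Prop :=
  forall (x y : 'rV[R]_n) (t : R), 0 <= t -> t <= 1 ->
    f (t *: x + (1 - t) *: y) <= t * f x + (1 - t) * f y.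

Definition idx (I : {set 'I_n}) := {i : 'I_n | i \in I}.
Definition binvec (I : {set 'I_n}) := idx I -> bool.

Definition hfeas (h : 'rV[R]_n -> 'rV[R]_p) : set 'rV[R]_n :=
  [set x | forall j : 'I_p, 0 <= h x ord0 j].

Definition inX (h : 'rV[R]_n -> 'rV[R]_p) (I : {set 'I_n}) (x : 'rV[R]_n) : Prop :=
  hfeas h x /\ (forall i : 'I_n, i \in I -> 0 <= x ord0 i /\ x ord0 i <= 1).

Definition obj (I : {set 'I_n}) (x : 'rV[R]_n) (y : binvec I) : R :=
  \sum_(i : idx I) `| x ord0 (val i) - (y i)%:R |.

(* rounding of x_I with ties (x_i = 1/2) broken lexicographically minimally, i.e. to 0 *)
Definition round (I : {set 'I_n}) (x : 'rV[R]_n) : binvec I :=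
  fun i => (1 / 2 < x ord0 (val i)).

Definition partial_min (h : 'rV[R]_n -> 'rV[R]_p) (I : {set 'I_n})
    (xs : 'rV[R]_n) (ys : binvec I) : Prop :=
  inX h I xs /\
  (forall x, inX h I x -> obj I xs ys <= obj I x ys) /\
  (forall y : binvec I, obj I xs ys <= obj I xs y).

Definition minlp_feasible (h : 'rV[R]_n -> 'rV[R]_p) (I : {set 'I_n}) (x : 'rV[R]_n) : Prop :=
  hfeas h x /\ (forall i : 'I_n, i \in I -> x ord0 i = 0 \/ x ord0 i = 1).

(* a run of the idealized feasibility pump: x 0 solves the continuous relaxation,
   y k is the rounding of x k, and as long as no iterate up to k is a partial
   minimum (stopping rule), x (k+1) is a global minimizer of ||x_I - y k||_1 over X *)
Definition fp_run (F : 'rV[R]_n -> R) (h : 'rV[R]_n -> 'rV[R]_p) (I : {set 'I_n})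
    (x : nat -> 'rV[R]_n) (y : nat -> binvec I) : Prop :=
  (inX h I (x 0%N) /\ forall z, inX h I z -> F (x 0%N) <= F z) /\
  (forall k, y k = round I (x k)) /\
  (forall k, (forall j, (j <= k)%N -> ~ partial_min h I (x j) (y j)) ->
     inX h I (x k.+1) /\ forall z, inX h I z -> obj I (x k.+1) (y k) <= obj I z (y k)).

End FP.

From HB Require Import structures.
From mathcomp Require Import all_boot all_order all_algebra.
From mathcomp Require Import all_classical all_reals all_analysis.
From mathcomp Require Import lra.
Import Order.TTheory GRing.Theory Num.Theory.
Import numFieldNormedType.Exports.
Local Open Scope classical_set_scope.
Local Open Scope ring_scope.

(* The feasibility pump is alternating minimization of f(x, y) = ||x_I - y||_1
   over X x Y.  As long as no iterate is a partial minimum, the values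
   f(x_{k+1}, y_k) decrease strictly; since f(x_{k+1}, y_k) is the least value
   of f( . , y_k) on X, no y-iterate can then repeat.  As Y = {0,1}^I is finite,
   a partial minimum is reached, and if its value is 0 then x_I = y is binary.
   Convexity, continuity and compactness only serve to make the x-steps well
   defined; [fp_run] already provides the minimizers. *)

Lemma no_injective_nat_to_finType (T : finType) (u : nat -> T) : ~ injective u.
Proof.
move=> u_inj; pose g (i : 'I_#|T|.+1) := u i.
have g_inj : injective g by move=> i j /u_inj /val_inj.
by have := leq_card g g_inj; rewrite card_ord ltnn.
Qed.

Section AlternatingMinimization.
Context {R : realType} {T Y : Type}.
Variables (X : set T) (f : T -> Y -> R).

Definition partial_minimum (xs : T) (ys : Y) : Prop :=
  X xs /\ (forall x, X x -> f xs ys <= f x ys) /\ (forall y, f xs ys <= f xs y).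

Variables (x : nat -> T) (y : nat -> Y).
Hypothesis x0_in : X (x 0%N).
Hypothesis y_argmin : forall k y', f (x k) (y k) <= f (x k) y'.
Hypothesis x_argmin : forall k, (forall j, (j <= k)%N -> ~ partial_minimum (x j) (y j)) ->
  X (x k.+1) /\ forall z, X z -> f (x k.+1) (y k) <= f z (y k).

Section NoPartialMinimum.
Hypothesis no_pmin : forall k, ~ partial_minimum (x k) (y k).

Let x_step k : X (x k.+1) /\ forall z, X z -> f (x k.+1) (y k) <= f z (y k).
Proof. by apply: x_argmin => j _; exact: no_pmin. Qed.

Let x_in k : X (x k).
Proof. by case: k => [|k]; [exact: x0_in | exact: (x_step k).1]. Qed.

Lemma alternating_value_decreasing k :
  f (x k.+2) (y k.+1) < f (x k.+1) (y k).
Proof.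
have [z Xz lt_z] : exists2 z, X z & f z (y k.+1) < f (x k.+1) (y k.+1).
  apply: contrapT => no_better; apply: (no_pmin k.+1); split; first exact: x_in.
  split=> [z Xz|]; last exact: y_argmin.
  by rewrite leNgt; apply/negP => lt_z; apply: no_better; exists z.
apply: le_lt_trans ((x_step k.+1).2 z Xz) _.
exact: lt_le_trans lt_z (y_argmin k.+1 (y k)).
Qed.

Lemma alternating_iterates_injective : injective y.
Proof.
have decr : {homo (fun k => f (x k.+1) (y k)) : i j / (i < j)%N >-> j < i}.
  apply: (@homo_ltn _ _ (fun a b => b < a)); last exact: alternating_value_decreasing.
  by move=> ? ? ? /[swap]; exact: lt_trans.
have neq k l : (k < l)%N -> y k <> y l.
  move=> lt_kl yk_yl; have := (x_step k).2 _ (x_in l.+1).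
  by rewrite {2}yk_yl leNgt (decr _ _ lt_kl).
move=> k l yk_yl.
by case: (ltngtP k l) => // [/neq /(_ yk_yl) | /neq /(_ (esym yk_yl))].
Qed.

End NoPartialMinimum.

Lemma alternating_minimization_terminates (U : finType) (enc : Y -> U) :
  injective enc -> exists k, partial_minimum (x k) (y k).
Proof.
move=> enc_inj; apply: contrapT => /forallNP no_pmin.
apply: (@no_injective_nat_to_finType U (enc \o y)).
exact: inj_comp enc_inj (alternating_iterates_injective no_pmin).
Qed.

End AlternatingMinimization.

Arguments alternating_minimization_terminates {R T Y X f x y} _ _ _ {U enc}.

Lemma first_witness {P : nat -> Prop} :
  (exists k, P k) -> exists k, P k /\ forall j, (j < k)%N -> ~ P j.
Proof.
move=> exP; have exPb : exists k, `[< P k >] by case: exP => k Pk; exists k; apply/asboolP.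
case: (ex_minnP exPb) => k /asboolP Pk k_min; exists k; split=> // j lt_jk Pj.
by have := k_min j (asboolT Pj); rewrite leqNgt lt_jk.
Qed.

Section BinaryVectors.
Variables (R : realType) (n : nat) (I : {set 'I_n}).

Lemma dist_round_le (a : R) (b : bool) : `|a - (1 / 2 < a)%R%:R| <= `|a - b%:R|.
Proof.
case: (ltrP (1 / 2) a) => [lt_a|le_a]; case: b => //=; rewrite subr0.
- by rewrite (gtr0_norm (x := a)) ?ler_norml; [apply/andP; split|]; lra.
- by case: (lerP 0 a) => [a_ge0|a_lt0];
    [rewrite ger0_norm | rewrite ltr0_norm]; rewrite // ler_normr; apply/orP; right; lra.
Qed.

Lemma round_argmin (x : 'rV[R]_n) (y : binvec I) : obj I x (round I x) <= obj I x y.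
Proof. by apply: ler_sum => i _; exact: dist_round_le. Qed.

Definition binvec_enc (y : binvec I) : {ffun idx I -> bool} := [ffun i => y i].

Lemma binvec_enc_inj : injective binvec_enc.
Proof. by move=> y1 y2 /ffunP eq_y; apply: funext => i; have := eq_y i; rewrite !ffunE. Qed.

Lemma obj_eq0_binary (x : 'rV[R]_n) (y : binvec I) :
  obj I x y = 0 -> forall i, i \in I -> x ord0 i = 0 \/ x ord0 i = 1.
Proof.
move=> obj0 i iI; pose j : idx I := exist _ i iI.
have := @psumr_eq0P _ _ _ _ (fun k _ => normr_ge0 _) obj0 j isT.
by move=> /normr0_eq0 /subr0_eq /=; case: (y j) => ->; [right | left].
Qed.

End BinaryVectors.

Theorem mainTheorem3 (R : realType) (n p : nat)
    (F : 'rV[R]_n -> R) (h : 'rV[R]_n -> 'rV[R]_p) (I : {set 'I_n})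
    (HFconv : convex_fun F) (HFcont : continuous F)
    (Hhconv : forall j : 'I_p, convex_fun (fun x => - h x ord0 j))
    (Hhcont : continuous h)
    (HI : I != finset.set0)
    (Hne : hfeas h !=set0) (Hcpt : compact (hfeas h))
    (x : nat -> 'rV[R]_n) (y : nat -> binvec I)
    (Hrun : fp_run F h I x y) :
  exists K : nat,
    (forall k, (k < K)%N -> ~ partial_min h I (x k) (y k)) /\
    partial_min h I (x K) (y K) /\
    (obj I (x K) (y K) = 0 -> minlp_feasible h I (x K)).
Proof.
case: Hrun => [[x0_in _] [y_round x_step]].
have y_argmin k y' : obj I (x k) (y k) <= obj I (x k) y'.
  by rewrite y_round; exact: round_argmin.
have [K [pmin_K first_K]] := first_witness
  (alternating_minimization_terminates x0_in y_argmin x_step (@binvec_enc_inj n I)).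
exists K; split; first exact: first_K.
split=> [|obj0]; first exact: pmin_K.
by split; [exact: pmin_K.1.1 | exact: obj_eq0_binary obj0].
Qed.
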